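(* Assume that for each $l\in PC$ the map $h_l(\rho)=\sigma_l\rho\sigma_l^*/\operatorname{tr}(\sigma_l\rho\sigma_l^* )$ is a polynomial of degree at most one. Then the infinitesimal generator $\mathcal{A}$ maps polynomials to polynomials: if $w(t,\rho)$ is a polynomial (in $t$ and the real and imaginary parts of the entries of $\rho$), then $\mathcal{A}w(t,\rho,u)$ is a polynomial in $(t,\rho,u)$.
   Context: Fix integers $n\ge 1$, $K\ge 1$, $L\ge 0$. Let $H_0,\dots,H_K\in\mathbb{C}^{n\times n}$ be Hermitian and for $u\in\mathbb{R}^K$ set $H(u)=H_0+\sum_{k=1}^K u_kH_k$. Let $\sigma_1,\dots,\sigma_L\in\mathbb{C}^{n\times n}$ and partition $\{1,\dots,L\}=HD\sqcup PC$. $A^*$ is the conjugate transpose, $[A,C]=AC-CA$, $\{A,C\}=AC+CA$. Define $\mathcal{L}(u)\rho=-i[H(u),\rho]+\sum_{l=1}^L\big(\sigma_l\rho\sigma_l^*-\tfrac12\{\sigma_l^*\sigma_l,\rho\}\big)$; for $l\in HD$: $\mathcal{G}_l\rho=\sigma_l\rho+\rho\sigma_l^*-\operatorname{tr}(\sigma_l\rho+\rho\sigma_l^* )\rho$; for $l\in PC$: $\lambda_l(\rho)=\operatorname{tr}(\sigma_l\rho\sigma_l^* )$, $h_l(\rho)=\sigma_l\rho\sigma_l^*/\lambda_l(\rho)$, $\mathcal{L}_l\rho=\sigma_l\rho\sigma_l^*-\lambda_l(\rho)\rho$; and $\tilde{\mathcal{L}}(u)=\mathcal{L}(u)-\sum_{l\in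 PC}\mathcal{L}_l$. The infinitesimal generator of the quantum filtering equation $d\rho_t=\mathcal{L}(u_t)\rho_t\,dt+\sum_{l\in HD}\mathcal{G}_l\rho_t\,dw^l_t+\sum_{l\in PC}[(h_l(\rho_t)-\rho_t)dn^l_t-\mathcal{L}_l\rho_t\,dt]$ acts on smooth $w(t,\rho)$ by $\mathcal{A}w(t,\rho,u)=\frac{\partial w}{\partial t}(t,\rho)+\langle\tilde{\mathcal{L}}(u)\rho,\nabla_\rho w(t,\rho)\rangle+\frac12\sum_{l\in HD}\langle\mathcal{G}_l\rho,\nabla^2_\rho w(t,\rho)\,\mathcal{G}_l\rho\rangle+\sum_{l\in PC}\lambda_l(\rho)\big(w(t,h_l(\rho))-w(t,\rho)\big)$, where $\langle\cdot,\cdot\rangle$ is the real inner product on Hermitian matrices with respect to which $\nabla_\rho$ and $\nabla^2_\rho$ are taken. A polynomial in $\rho$ means a real-coefficient polynomial jointly in the entries of $\operatorname{Re}\rho$ and $\operatorname{Im}\rho$; matrix-valued maps are polynomial if all components are. *)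

From mathcomp Require Import all_boot all_algebra.
From mathcomp Require Import complex.
From mathcomp Require Import all_classical all_reals all_analysis.
Set Implicit Arguments. Unset Strict Implicit. Unset Printing Implicit Defensive.
Import GRing.Theory Num.Theory.
Local Open Scope ring_scope.

Section QF.
Variable R : realType.
Local Notation C := (R[i]).

Inductive polyfun (X I : Type) (c : I -> X -> R) : (X -> R) -> Prop :=
| PF_coord i : polyfun c (c i)
| PF_const a : polyfun c (fun _ => a)
| PF_add f g : polyfun c f -> polyfun c g -> polyfun c (fun x => f x + g x)
| PF_mul f g : polyfun c f -> polyfun c g -> polyfun c (fun x => f x * g x).

Inductive affinefun (X I : Type) (c : I -> X -> R) : (X -> R) -> Prop :=
| AF_coord i : affinefun c (c i)
| AF_const a : affinefun c (fun _ => a)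
| AF_add f g : affinefun c f -> affinefun c g -> affinefun c (fun x => f x + g x)
| AF_scale a f : affinefun c f -> affinefun c (fun x => a * f x).

Definition mat_coord n (k : 'I_n * 'I_n * bool) (rho : 'M[C]_n) : R :=
  let: (i, j, b) := k in
  if b then complex.Re (rho i j) else complex.Im (rho i j).

Definition tr_coord n (k : unit + ('I_n * 'I_n * bool)) (x : R * 'M[C]_n) : R :=
  match k with inl _ => x.1 | inr k' => mat_coord k' x.2 end.

Definition tru_coord n K (k : (unit + ('I_n * 'I_n * bool)) + 'I_K)
    (x : (R * 'M[C]_n) * ('I_K -> R)) : R :=
  match k with inl k' => tr_coord k' x.1 | inr k' => x.2 k' end.

Definition affine_mx n (P : 'M[C]_n -> 'M[C]_n) : Prop :=
  forall i j, affinefun (@mat_coord n) (fun rho => complex.Re (P rho i j)) /\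
              affinefun (@mat_coord n) (fun rho => complex.Im (P rho i j)).

Definition adj m p (A : 'M[C]_(m, p)) : 'M[C]_(p, m) := \matrix_(i, j) (A j i)^*.
Definition is_hermitian n (A : 'M[C]_n) : Prop := adj A = A.
Definition is_density n (rho : 'M[C]_n) : Prop :=
  is_hermitian rho /\ \tr rho = 1 /\
  forall v : 'cV[C]_n, 0 <= (adj v *m rho *m v) ord0 ord0.

Definition comm n (A B : 'M[C]_n) := A *m B - B *m A.
Definition acomm n (A B : 'M[C]_n) := A *m B + B *m A.

Definition Hu n K (H0 : 'M[C]_n) (H : 'I_K -> 'M[C]_n) (u : 'I_K -> R) :=
  H0 + \sum_(k < K) ((u k)%:C)%C *: H k.

Definition Lgen n K L (H0 : 'M[C]_n) (H : 'I_K -> 'M[C]_n) (sigma : 'I_L -> 'M[C]_n)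
    (u : 'I_K -> R) (rho : 'M[C]_n) : 'M[C]_n :=
  - 'i *: comm (Hu H0 H u) rho +
  \sum_(l < L) (sigma l *m rho *m adj (sigma l)
                 - 2%:R^-1 *: acomm (adj (sigma l) *m sigma l) rho).

Definition Gop n (s rho : 'M[C]_n) : 'M[C]_n :=
  s *m rho + rho *m adj s - \tr (s *m rho + rho *m adj s) *: rho.
Definition lam n (s rho : 'M[C]_n) : C := \tr (s *m rho *m adj s).
Definition hmap n (s rho : 'M[C]_n) : 'M[C]_n := (lam s rho)^-1 *: (s *m rho *m adj s).
Definition Ljump n (s rho : 'M[C]_n) : 'M[C]_n := s *m rho *m adj s - lam s rho *: rho.

Definition Ltilde n K L (H0 : 'M[C]_n) (H : 'I_K -> 'M[C]_n) (sigma : 'I_L -> 'M[C]_n)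
    (PC : {set 'I_L}) (u : 'I_K -> R) (rho : 'M[C]_n) : 'M[C]_n :=
  Lgen H0 H sigma u rho - \sum_(l in PC) Ljump (sigma l) rho.

(** <X, grad f(rho)> and <X, Hess f(rho) X>, as first and second directional
    derivatives along the real line s |-> rho + s X. *)
Definition dderiv n (f : 'M[C]_n -> R) (rho X : 'M[C]_n) : R :=
  derive1 (fun s : R => f (rho + (s%:C)%C *: X)) 0.
Definition dderiv2 n (f : 'M[C]_n -> R) (rho X : 'M[C]_n) : R :=
  derive1 (derive1 (fun s : R => f (rho + (s%:C)%C *: X))) 0.

(** The infinitesimal generator A w (t, rho, u); HD is the complement of PC. *)
Definition gen n K L (H0 : 'M[C]_n) (H : 'I_K -> 'M[C]_n) (sigma : 'I_L -> 'M[C]_n)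
    (PC : {set 'I_L}) (w : R -> 'M[C]_n -> R) (t : R) (rho : 'M[C]_n)
    (u : 'I_K -> R) : R :=
  derive1 (fun s : R => w s rho) t
  + dderiv (w t) rho (Ltilde H0 H sigma PC u rho)
  + 2%:R^-1 * \sum_(l in ~: PC) dderiv2 (w t) rho (Gop (sigma l) rho)
  + \sum_(l in PC) complex.Re (lam (sigma l) rho)
                   * (w t (hmap (sigma l) rho) - w t rho).

End QF.

From mathcomp Require Import all_boot all_algebra.
From mathcomp Require Import complex.
From mathcomp Require Import all_classical all_reals all_analysis.
Import GRing.Theory Num.Theory.
Local Open Scope ring_scope.

(** Restricted to a line [s |-> (t, rho + s X)] whose direction [X] depends
    polynomially on [(t, rho, u)], a polynomial [w] becomes a polynomial in [s]
    whose coefficients are polynomial in [(t, rho, u)]; hence its derivatives at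
    [s = 0], i.e. the drift and diffusion terms of [A w], are polynomial, as is
    the time derivative.  The drift [L~(u) rho] and the diffusion directions
    [G_l rho] are polynomial matrix expressions.  A jump term
    [lambda_l(rho) (w(h_l rho) - w rho)] vanishes where [lambda_l(rho) = 0] and
    equals [lambda_l(rho) (w(P rho) - w rho)] with [P] affine elsewhere. *)

Section PolynomialFunctions.
Context {R : realType} {Y I : Type} {c : I -> Y -> R}.

Lemma eq_polyfun g f : g =1 f -> polyfun c g -> polyfun c f.
Proof. by move=> /funext ->. Qed.

Lemma polyfun_opp {f} : polyfun c f -> polyfun c (fun y => - f y).
Proof.
move=> hf; apply: (eq_polyfun (fun y => -1 * f y)); first by move=> y; rewrite mulN1r.
exact: PF_mul (PF_const _ _) hf.
Qed.

Lemma polyfun_sub {f g} : polyfun c f -> polyfun c g -> polyfun c (fun y => f y - g y).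
Proof. by move=> hf hg; apply: PF_add => //; apply: polyfun_opp. Qed.

Lemma polyfun_exp {f} m : polyfun c f -> polyfun c (fun y => f y ^+ m).
Proof.
move=> hf; elim: m => [|m IH].
  by apply: (eq_polyfun (fun _ => 1)) (PF_const _ _) => y; rewrite expr0.
by apply: (eq_polyfun (fun y => f y * f y ^+ m)) (PF_mul hf IH) => y; rewrite exprS.
Qed.

Lemma polyfun_sum {J : Type} (r : seq J) (P : pred J) (F : J -> Y -> R) :
  (forall j, P j -> polyfun c (F j)) ->
  polyfun c (fun y => \sum_(j <- r | P j) F j y).
Proof.
move=> hF; elim: r => [|j r IH].
  by apply: (eq_polyfun (fun _ => 0)) (PF_const _ _) => y; rewrite big_nil.
rewrite /=; under eq_fun do rewrite big_cons.
by case Pj: (P j); first exact: PF_add (hF j Pj) IH.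
Qed.

Lemma polyfun_comp {X J : Type} {b : J -> X -> R} {f : X -> R} (phi : Y -> X) :
  polyfun b f -> (forall j, polyfun c (fun y => b j (phi y))) ->
  polyfun c (fun y => f (phi y)).
Proof.
move=> hf hb; elim: hf => [j|a|f1 g1 _ h1 _ h2|f1 g1 _ h1 _ h2].
- exact: hb.
- exact: PF_const.
- exact: PF_add h1 h2.
- exact: PF_mul h1 h2.
Qed.

Definition polyfun_on (D : Y -> Prop) (f : Y -> R) :=
  exists2 g, polyfun c g & forall y, D y -> f y = g y.

Lemma polyfun_onW D f : polyfun c f -> polyfun_on D f.
Proof. by exists f. Qed.

Lemma polyfun_onD D f g :
  polyfun_on D f -> polyfun_on D g -> polyfun_on D (fun y => f y + g y).
Proof.
move=> [f' hf ef] [g' hg eg]; exists (fun y => f' y + g' y); first exact: PF_add.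
by move=> y Dy; rewrite ef ?eg.
Qed.

Lemma polyfun_on_sum {J : Type} (r : seq J) (P : pred J) D (F : J -> Y -> R) :
  (forall j, P j -> polyfun_on D (F j)) ->
  polyfun_on D (fun y => \sum_(j <- r | P j) F j y).
Proof.
move=> hF; elim: r => [|j r IH].
  by exists (fun _ => 0) => [|y _]; [exact: PF_const | rewrite big_nil].
rewrite /=; under eq_fun do rewrite big_cons.
by case Pj: (P j); first exact: polyfun_onD (hF j Pj) IH.
Qed.

End PolynomialFunctions.

Arguments polyfun_on {R Y I} c D f.

Lemma affinefun_polyfun (R : realType) (Y I : Type) (c : I -> Y -> R) f :
  affinefun c f -> polyfun c f.
Proof.
elim=> [j|a|f1 g1 _ h1 _ h2|a f1 _ h1].
- exact: PF_coord.
- exact: PF_const.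
- exact: PF_add h1 h2.
- exact: PF_mul (PF_const _ _) h1.
Qed.

Section PolynomialFamilies.
Context {R : realType} {Y I : Type} {c : I -> Y -> R}.

Definition coef_polyfun (Q : Y -> {poly R}) :=
  (exists N, forall y, (size (Q y) <= N)%N) /\ forall k, polyfun c (fun y => (Q y)`_k).

Lemma horner_polyfun {Q e} :
  coef_polyfun Q -> polyfun c e -> polyfun c (fun y => (Q y).[e y]).
Proof.
move=> [[N hN] hQ] he.
apply: (eq_polyfun (fun y => \sum_(k < N) (Q y)`_k * e y ^+ k)).
  by move=> y; rewrite (horner_coef_wide _ (hN y)).
by apply: polyfun_sum => k _; apply: PF_mul => //; apply: polyfun_exp.
Qed.

Lemma coef_polyfun_deriv {Q} : coef_polyfun Q -> coef_polyfun (fun y => (Q y)^`()).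
Proof.
move=> [[N hN] hQ]; split.
  exists N => y; have [->|nz] := eqVneq (Q y) 0; first by rewrite deriv0 size_poly0.
  exact: leq_trans (ltnW (lt_size_deriv nz)) (hN y).
move=> k; apply: (eq_polyfun (fun y => (Q y)`_k.+1 * k.+1%:R)).
  by move=> y; rewrite coef_deriv mulr_natr.
exact: PF_mul (hQ _) (PF_const _ _).
Qed.

Lemma coef_polyfunC a : polyfun c a -> coef_polyfun (fun y => (a y)%:P).
Proof.
move=> ha; split=> [|[|k]]; first by exists 1%N => y; exact: size_polyC_leq1.
  by apply: (eq_polyfun a) => // y; rewrite coefC.
by apply: (eq_polyfun (fun _ => 0)) (PF_const _ _) => y; rewrite coefC.
Qed.

Lemma coef_polyfunX : coef_polyfun (fun _ => 'X).
Proof.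
split=> [|k]; first by exists 2%N => y; rewrite size_polyX.
by apply: (eq_polyfun (fun _ => (k == 1%N)%:R)) (PF_const _ _) => y; rewrite coefX.
Qed.

Lemma coef_polyfunD {P Q} :
  coef_polyfun P -> coef_polyfun Q -> coef_polyfun (fun y => P y + Q y).
Proof.
move=> [[M hM] hP] [[N hN] hQ]; split.
  exists (maxn M N) => y; apply: leq_trans (size_polyD _ _) _.
  by rewrite geq_max !leq_max hM hN orbT.
move=> k; apply: (eq_polyfun (fun y => (P y)`_k + (Q y)`_k)) (PF_add (hP k) (hQ k)).
by move=> y; rewrite coefD.
Qed.

Lemma coef_polyfunM {P Q} :
  coef_polyfun P -> coef_polyfun Q -> coef_polyfun (fun y => P y * Q y).
Proof.
move=> [[M hM] hP] [[N hN] hQ]; split.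
  exists (M + N)%N => y; apply: leq_trans (size_polyMleq _ _) _.
  exact: leq_trans (leq_pred _) (leq_add (hM y) (hN y)).
move=> k; apply: (eq_polyfun (fun y => \sum_(j < k.+1) (P y)`_j * (Q y)`_(k - j))).
  by move=> y; rewrite coefM.
by apply: polyfun_sum => j _; apply: PF_mul.
Qed.

Lemma coef_polyfun_comp {X J : Type} {b : J -> X -> R} {f : X -> R}
    (gam : Y -> R -> X) (B : J -> Y -> {poly R}) :
  polyfun b f -> (forall j, coef_polyfun (B j)) ->
  (forall j y s, b j (gam y s) = (B j y).[s]) ->
  exists2 Q, coef_polyfun Q & forall y s, f (gam y s) = (Q y).[s].
Proof.
move=> hf hB egam.
elim: hf => [j|a|f1 g1 _ [P hP eP] _ [Q hQ eQ]|f1 g1 _ [P hP eP] _ [Q hQ eQ]].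
- by exists (B j).
- by exists (fun _ => a%:P) => [|y s]; [exact/coef_polyfunC/PF_const | rewrite hornerC].
- by exists (fun y => P y + Q y) => [|y s]; [exact: coef_polyfunD | rewrite hornerD eP eQ].
- by exists (fun y => P y * Q y) => [|y s]; [exact: coef_polyfunM | rewrite hornerM eP eQ].
Qed.

End PolynomialFamilies.

Arguments coef_polyfun {R Y I} c Q.

Section ComplexPolynomialFunctions.
Context {R : realType} {Y I : Type} {c : I -> Y -> R}.
Local Notation C := R[i].

Definition polyfunC (f : Y -> C) :=
  polyfun c (fun y => complex.Re (f y)) /\ polyfun c (fun y => complex.Im (f y)).

Definition polyfun_mx {m p} (A : Y -> 'M[C]_(m, p)) :=
  forall i j, polyfunC (fun y => A y i j).

Lemma eq_polyfunC g f : g =1 f -> polyfunC g -> polyfunC f.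
Proof. by move=> /funext ->. Qed.

Lemma polyfunC_cst a : polyfunC (fun _ => a).
Proof. by split; apply: PF_const. Qed.

Lemma polyfunC_real a : polyfun c a -> polyfunC (fun y => (a y)%:C%C).
Proof. by split=> //; apply: PF_const. Qed.

Lemma polyfunCD {f g} : polyfunC f -> polyfunC g -> polyfunC (fun y => f y + g y).
Proof.
move=> [fr fi] [gr gi]; split.
  by apply: (eq_polyfun _ _ _ (PF_add fr gr)) => y; case: (f y) (g y) => [? ?] [? ?].
by apply: (eq_polyfun _ _ _ (PF_add fi gi)) => y; case: (f y) (g y) => [? ?] [? ?].
Qed.

Lemma polyfunCN {f} : polyfunC f -> polyfunC (fun y => - f y).
Proof.
move=> [fr fi]; split.
  by apply: (eq_polyfun _ _ _ (polyfun_opp fr)) => y; case: (f y).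
by apply: (eq_polyfun _ _ _ (polyfun_opp fi)) => y; case: (f y).
Qed.

Lemma polyfunCM {f g} : polyfunC f -> polyfunC g -> polyfunC (fun y => f y * g y).
Proof.
move=> [fr fi] [gr gi]; split.
  apply: (eq_polyfun _ _ _ (polyfun_sub (PF_mul fr gr) (PF_mul fi gi))).
  by move=> y; case: (f y) (g y) => [? ?] [? ?].
apply: (eq_polyfun _ _ _ (PF_add (PF_mul fr gi) (PF_mul fi gr))).
by move=> y; case: (f y) (g y) => [? ?] [? ?].
Qed.

Lemma polyfunC_conj {f} : polyfunC f -> polyfunC (fun y => (f y)^*).
Proof.
move=> [fr fi]; split; first by apply: (eq_polyfun _ _ _ fr) => y; case: (f y).
by apply: (eq_polyfun _ _ _ (polyfun_opp fi)) => y; case: (f y).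
Qed.

Lemma polyfunC_sum {J : Type} (r : seq J) (P : pred J) (F : J -> Y -> C) :
  (forall j, polyfunC (F j)) -> polyfunC (fun y => \sum_(j <- r | P j) F j y).
Proof.
move=> hF; elim: r => [|j r IH].
  by apply: (eq_polyfunC (fun _ => 0)) (polyfunC_cst _) => y; rewrite big_nil.
rewrite /=; under eq_fun do rewrite big_cons.
by case: (P j); first exact: polyfunCD (hF j) IH.
Qed.

Lemma polyfun_mx_cst {m p} (A : 'M[C]_(m, p)) : polyfun_mx (fun _ => A).
Proof. by move=> i j; apply: polyfunC_cst. Qed.

Lemma polyfun_mxD {m p} {A B : Y -> 'M[C]_(m, p)} :
  polyfun_mx A -> polyfun_mx B -> polyfun_mx (fun y => A y + B y).
Proof.
move=> hA hB i j; apply: (eq_polyfunC _ _ _ (polyfunCD (hA i j) (hB i j))).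
by move=> y; rewrite mxE.
Qed.

Lemma polyfun_mxN {m p} {A : Y -> 'M[C]_(m, p)} :
  polyfun_mx A -> polyfun_mx (fun y => - A y).
Proof.
by move=> hA i j; apply: (eq_polyfunC _ _ _ (polyfunCN (hA i j))) => y; rewrite mxE.
Qed.

Lemma polyfun_mxZ {m p} {a : Y -> C} {A : Y -> 'M[C]_(m, p)} :
  polyfunC a -> polyfun_mx A -> polyfun_mx (fun y => a y *: A y).
Proof.
move=> ha hA i j; apply: (eq_polyfunC _ _ _ (polyfunCM ha (hA i j))).
by move=> y; rewrite mxE.
Qed.

Lemma polyfun_mxM {m p q} {A : Y -> 'M[C]_(m, p)} {B : Y -> 'M[C]_(p, q)} :
  polyfun_mx A -> polyfun_mx B -> polyfun_mx (fun y => A y *m B y).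
Proof.
move=> hA hB i j.
have := polyfunC_sum (index_enum 'I_p) predT _ (fun k => polyfunCM (hA i k) (hB k j)).
by apply: eq_polyfunC => y; rewrite mxE.
Qed.

Lemma polyfun_mx_adj {m p} {A : Y -> 'M[C]_(m, p)} :
  polyfun_mx A -> polyfun_mx (fun y => adj (A y)).
Proof.
move=> hA i j; apply: (eq_polyfunC _ _ _ (polyfunC_conj (hA j i))).
by move=> y; rewrite mxE.
Qed.

Lemma polyfun_mx_sum {m p} {J : Type} (r : seq J) (P : pred J) (F : J -> Y -> 'M[C]_(m, p)) :
  (forall j, polyfun_mx (F j)) -> polyfun_mx (fun y => \sum_(j <- r | P j) F j y).
Proof.
move=> hF i k; have := polyfunC_sum r P _ (fun j => hF j i k).
by apply: eq_polyfunC => y; rewrite summxE.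
Qed.

Lemma polyfunC_trace {m} {A : Y -> 'M[C]_m} : polyfun_mx A -> polyfunC (fun y => \tr (A y)).
Proof. by move=> hA; apply: polyfunC_sum => i; apply: hA. Qed.

End ComplexPolynomialFunctions.

Arguments polyfunC {R Y I} c f.
Arguments polyfun_mx {R Y I} c {m p} A.

Section Generator.
Context {R : realType} {n K : nat}.
Local Notation C := R[i].
Local Notation Y := ((R * 'M[C]_n) * ('I_K -> R))%type.
Local Notation coord := (@tru_coord R n K).

Lemma polyfun_time : polyfun coord (fun y : Y => y.1.1).
Proof. exact: (PF_coord coord (inl (inl tt))). Qed.

Lemma polyfun_control k : polyfun coord (fun y : Y => y.2 k).
Proof. exact: (PF_coord coord (inr k)). Qed.

Lemma polyfun_state_coord k : polyfun coord (fun y : Y => mat_coord k y.1.2).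
Proof. exact: (PF_coord coord (inl (inr k))). Qed.

Lemma polyfun_mx_state : polyfun_mx coord (fun y : Y => y.1.2).
Proof.
by move=> i j; split; [exact: (polyfun_state_coord (i, j, true)) |
                       exact: (polyfun_state_coord (i, j, false))].
Qed.

Ltac polyfun_mx_closure :=
  repeat first
    [ exact: polyfun_mx_state | exact: polyfun_control
    | exact: polyfun_mx_cst | exact: polyfunC_cst
    | apply: polyfun_mxD | apply: polyfun_mxN | apply: polyfun_mxZ
    | apply: polyfun_mxM | apply: polyfun_mx_adj | apply: polyfun_mx_sum => ?
    | apply: polyfunC_trace | apply: polyfunC_real ].

Lemma polyfunC_lam (s : 'M[C]_n) : polyfunC coord (fun y : Y => lam s y.1.2).
Proof. by rewrite /lam; polyfun_mx_closure. Qed.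

Lemma polyfun_mx_Ltilde {L} (H0 : 'M[C]_n) (H : 'I_K -> 'M[C]_n) (sigma : 'I_L -> 'M[C]_n)
    (PC : {set 'I_L}) :
  polyfun_mx coord (fun y : Y => Ltilde H0 H sigma PC y.2 y.1.2).
Proof. by rewrite /Ltilde /Lgen /Hu /comm /acomm /Ljump /lam; polyfun_mx_closure. Qed.

Lemma polyfun_mx_Gop (s : 'M[C]_n) : polyfun_mx coord (fun y : Y => Gop s y.1.2).
Proof. by rewrite /Gop; polyfun_mx_closure. Qed.

Context {w : R -> 'M[C]_n -> R}.
Hypothesis hw : polyfun (@tr_coord R n) (fun x => w x.1 x.2).

Lemma polyfun_comp_state (P : 'M[C]_n -> 'M[C]_n) :
  (forall k, polyfun (@mat_coord R n) (fun rho => mat_coord k (P rho))) ->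
  polyfun coord (fun y : Y => w y.1.1 (P y.1.2)).
Proof.
move=> hP; apply: (polyfun_comp (fun y : Y => (y.1.1, P y.1.2)) hw).
case=> [[]|k]; first exact: polyfun_time.
exact: (polyfun_comp (fun y : Y => y.1.2) (hP k) polyfun_state_coord).
Qed.

Lemma mat_coord_line k (A X : 'M[C]_n) (s : R) :
  mat_coord k (A + s%:C%C *: X) = mat_coord k A + mat_coord k X * s.
Proof.
case: k => [[i j] []]; rewrite /= !mxE;
  by case: (A i j) (X i j) => [? ?] [? ?]; rewrite /= mul0r ?subr0 ?addr0 mulrC.
Qed.

Lemma coef_polyfun_line {a : Y -> R} (e : R) {X : Y -> 'M[C]_n} :
  polyfun coord a ->
  polyfun_mx coord X ->
  exists2 Q, coef_polyfun coord Q &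
    forall y s, w (a y + s * e) (y.1.2 + s%:C%C *: X y) = (Q y).[s].
Proof.
move=> ha hX.
apply: (coef_polyfun_comp
  (fun y s => (a y + s * e, y.1.2 + s%:C%C *: X y))
  (fun j y => (tr_coord j (a y, y.1.2))%:P + (tr_coord j (e, X y))%:P * 'X) hw).
  move=> j; apply: coef_polyfunD; last apply: coef_polyfunM coef_polyfunX.
    by apply: coef_polyfunC; case: j => [[]|k] //; exact: polyfun_state_coord.
  apply: coef_polyfunC; case: j => [[]|[[i j] []]];
    [exact: PF_const | exact: (hX i j).1 | exact: (hX i j).2].
move=> [[]|k] y s; rewrite hornerD hornerC hornerMX hornerC /=; first by rewrite mulrC.
exact: mat_coord_line.
Qed.

Lemma polyfun_derive1_time : polyfun coord (fun y : Y => derive1 (fun s => w s y.1.2) y.1.1).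
Proof.
have [Q hQ eQ] := coef_polyfun_line 1 (PF_const _ 0) (polyfun_mx_cst 0).
apply: (eq_polyfun (fun y => (Q y)^`().[y.1.1])).
  move=> y; suff -> : (fun s => w s y.1.2) = horner (Q y) by rewrite derivE.
  by apply: funext => s; rewrite -eQ add0r mulr1 scaler0 addr0.
by apply: horner_polyfun polyfun_time; apply: coef_polyfun_deriv.
Qed.

Lemma coef_polyfun_direction {X : Y -> 'M[C]_n} : polyfun_mx coord X ->
  exists2 Q, coef_polyfun coord Q &
    forall y, (fun s => w y.1.1 (y.1.2 + s%:C%C *: X y)) = horner (Q y).
Proof.
move=> hX; have [Q hQ eQ] := coef_polyfun_line 0 polyfun_time hX.
by exists Q => // y; apply: funext => s; rewrite -eQ mulr0 addr0.
Qed.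

Lemma polyfun_dderiv {X : Y -> 'M[C]_n} : polyfun_mx coord X ->
  polyfun coord (fun y => dderiv (w y.1.1) y.1.2 (X y)).
Proof.
move=> /coef_polyfun_direction[Q hQ eQ].
apply: (eq_polyfun (fun y => (Q y)^`().[0])); first by move=> y; rewrite /dderiv eQ derivE.
by apply: horner_polyfun (PF_const _ _); apply: coef_polyfun_deriv.
Qed.

Lemma polyfun_dderiv2 {X : Y -> 'M[C]_n} : polyfun_mx coord X ->
  polyfun coord (fun y => dderiv2 (w y.1.1) y.1.2 (X y)).
Proof.
move=> /coef_polyfun_direction[Q hQ eQ].
apply: (eq_polyfun (fun y => (Q y)^`()^`().[0])).
  by move=> y; rewrite /dderiv2 eQ !derivE.
by apply: horner_polyfun (PF_const _ _); do 2 apply: coef_polyfun_deriv.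
Qed.

Lemma polyfun_on_jump (S : 'M[C]_n -> Prop) (s : 'M[C]_n) (P : 'M[C]_n -> 'M[C]_n) :
  affine_mx P -> (forall rho, S rho -> lam s rho != 0 -> hmap s rho = P rho) ->
  polyfun_on coord (fun y => S y.1.2)
    (fun y => complex.Re (lam s y.1.2) * (w y.1.1 (hmap s y.1.2) - w y.1.1 y.1.2)).
Proof.
move=> hP ehP.
exists (fun y => complex.Re (lam s y.1.2) * (w y.1.1 (P y.1.2) - w y.1.1 y.1.2)).
  apply: PF_mul; first exact: (polyfunC_lam s).1.
  apply: polyfun_sub; last exact: (polyfun_comp_state id (PF_coord _)).
  apply: polyfun_comp_state => -[[i j] []];
    [exact/affinefun_polyfun/(hP i j).1 | exact/affinefun_polyfun/(hP i j).2].
move=> y Sy; have [->|nz] := eqVneq (lam s y.1.2) 0; first by rewrite !mul0r.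
by rewrite ehP.
Qed.

End Generator.

Theorem lemma3 (R : realType) (n K L : nat) (hn : (0 < n)%N) (hK : (0 < K)%N)
    (H0 : 'M[R[i]]_n) (H : 'I_K -> 'M[R[i]]_n)
    (hH0 : is_hermitian H0) (hH : forall k, is_hermitian (H k))
    (sigma : 'I_L -> 'M[R[i]]_n) (PC : {set 'I_L})
    (hPC : forall l, l \in PC ->
       exists P : 'M[R[i]]_n -> 'M[R[i]]_n, affine_mx P /\
         forall rho, is_density rho -> lam (sigma l) rho != 0 ->
           hmap (sigma l) rho = P rho)
    (w : R -> 'M[R[i]]_n -> R)
    (hw : polyfun (@tr_coord R n) (fun x => w x.1 x.2)) :
  exists q : (R * 'M[R[i]]_n) * ('I_K -> R) -> R,
    polyfun (@tru_coord R n K) q /\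
    forall t rho u, is_density rho ->
      gen H0 H sigma PC w t rho u = q ((t, rho), u).
Proof.
suff [q hq eq_q] : polyfun_on (@tru_coord R n K) (fun y => is_density y.1.2)
    (fun y => gen H0 H sigma PC w y.1.1 y.1.2 y.2).
  by exists q; split=> // t rho u /(eq_q ((t, rho), u)).
rewrite /gen; apply: polyfun_onD.
  apply/polyfun_onW/PF_add; first apply: PF_add.
  - exact: polyfun_derive1_time.
  - exact: (polyfun_dderiv hw (polyfun_mx_Ltilde H0 H sigma PC)).
  apply: PF_mul; first exact: PF_const.
  apply: polyfun_sum => l _.
  exact: (polyfun_dderiv2 hw (polyfun_mx_Gop _)).
apply: polyfun_on_sum => l /hPC [P [hP ehP]].
exact: polyfun_on_jump hP ehP.
Qed.
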